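(* For every $n>0$, there are finite alphabets $\Sigma_I,\Sigma_O$ and a language $L_n''\subseteq(\Sigma_I\times\Sigma_O)^\omega$ recognized by a finitary Büchi automaton with costs $\mathcal{A}_n''$ with $O(n^2)$ states such that for every $j\in\{0,1,\ldots,n\}$, an optimal winning strategy for Player $O$ in $\Gamma_{f_j}(L_n'')$ exists and has cost $2(n+1)-j$.
   Context: A parity automaton with costs is a tuple $\mathcal{A}=(Q,\Sigma,q_I,\delta,\Omega,\mathrm{Cst})$ with a finite set $Q$ of states, a finite alphabet $\Sigma$, an initial state $q_I$, a deterministic complete transition function $\delta\colon Q\times\Sigma\to Q$, a coloring $\Omega\colon Q\to\mathbb{N}$, and a cost function $\mathrm{Cst}$ assigning to every transition $(q,a,\delta(q,a))$ either $\epsilon$ or $\mathtt{i}$ (increment-transition). A finitary Büchi automaton is one in which every transition is an increment-transition and $\Omega(Q)=\{1,2\}$. The run on $a_0a_1\cdots$ is $(q_0,a_0,q_1)(q_1,a_1,q_2)\cdots$ with $q_0=q_I$, $q_{j+1}=\delta(q_j,a_j)$; the cost of a finite run is its number of increment-transitions. For odd $c$, $\mathrm{Ans}(c)=\{c'\in\Omega(Q)\mid c'>c,\ c'\text{ even}\}$. For an infinite run $\rho$ and $n$, $\mathrm{Cor}(\rho,n)=0$ if $\Omega(q_n)$ is even, and otherwise it is the minimal cost of $(q_n,a_n,q_{n+1})\cdots(q_{n'-1},a_{n'-1},q_{n'})$ over $n'>n$ with $\Omega(q_{n'})\in\mathrm{Ans}(\Omega(q_n))$ ($\min\emptyset=\infty$).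 The run is accepting if $\limsup_n\mathrm{Cor}(\rho,n)<\infty$; $L(\mathcal{A})$ is the set of infinite words whose run is accepting. A delay function is a map $f\colon\mathbb{N}\to\mathbb{N}\setminus\{0\}$; for $k\ge0$, $f_k$ denotes the delay function with $f_k(0)=k+1$ and $f_k(i)=1$ for $i>0$. For $L\subseteq(\Sigma_I\times\Sigma_O)^\omega$, the delay game $\Gamma_f(L)$ is played in rounds $i=0,1,2,\ldots$: in round $i$, Player $I$ picks $u_i\in\Sigma_I^{f(i)}$, then Player $O$ picks $v_i\in\Sigma_O$. Player $O$ wins the play if the outcome, i.e., the word over $\Sigma_I\times\Sigma_O$ pairing $u_0u_1u_2\cdots$ and $v_0v_1v_2\cdots$ letterwise, is in $L$. A strategy for Player $O$ is a map $\tau_O\colon\Sigma_I^*\to\Sigma_O$; a play is consistent with $\tau_O$ if $v_i=\tau_O(u_0\cdots u_i)$ for all $i$; $\tau_O$ is winning if every consistent play is won by Player $O$. For a winning strategy $\tau_O$ in $\Gamma_f(L(\mathcal{A}))$, its cost is $\mathrm{Cst}_\mathcal{A}(\tau_O)=\sup_w\limsup_{n\to\infty}\mathrm{Cor}(\rho(w),n)$, where $w$ ranges over outcomes of plays consistent with $\tau_O$ and $\rho(w)$ is the run of $\mathcal{A}$ on $w$; a winning strategy is optimal if its cost is minimal among all winning strategies of Player $O$ in $\Gamma_f(L(\mathcal{A}))$. *)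

From mathcomp Require Import all_boot.
Set Implicit Arguments. Unset Strict Implicit. Unset Printing Implicit Defensive.

(* Deterministic complete parity automaton with costs over alphabet Sigma.
   incr q a = true  iff the transition (q,a,delta q a) is an increment-transition. *)
Record pcaut (Sigma : finType) := PCAut {
  st    : finType;
  qI    : st;
  delta : st -> Sigma -> st;
  col   : st -> nat;
  incr  : st -> Sigma -> bool   (* cost function Cst: true = i, false = epsilon *)
}.

Section Aut.
Variables (Sigma : finType) (A : pcaut Sigma).

Fixpoint run (w : nat -> Sigma) (n : nat) : st A :=
  match n with
  | 0 => qI A
  | n'.+1 => @delta _ A (run w n') (w n')
  end.

Definition seg_cost (w : nat -> Sigma) (n n' : nat) : nat :=
  count (fun k => @incr _ A (run w k) (w k)) (iota n (n' - n)).

Definition is_answer (c c' : nat) : bool :=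
  [&& c' \in codom (@col _ A), c < c' & ~~ odd c'].

(* Cor(rho(w), n) <= k  (for finite k), where Cor is 0 for even colors and
   otherwise the minimum (min of empty set = infinity) of the segment costs
   to an answering position. *)
Definition cor_le (w : nat -> Sigma) (n k : nat) : Prop :=
  ~~ odd (@col _ A (run w n)) \/
  exists n', n < n' /\ is_answer (@col _ A (run w n)) (@col _ A (run w n')) /\
             seg_cost w n n' <= k.

Definition limsup_cor_le (w : nat -> Sigma) (k : nat) : Prop :=
  exists N, forall n, N <= n -> cor_le w n k.

Definition accepts (w : nat -> Sigma) : Prop := exists k, limsup_cor_le w k.

Definition finitary_buchi : Prop :=
  (forall q a, @incr _ A q a) /\ (forall c, c \in codom (@col _ A) <-> (c = 1 \/ c = 2)).

End Aut.

Definition fj (j : nat) : nat -> nat := fun i => if i is 0 then j.+1 else 1.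

Section Delay.
Variables (SI SO : finType) (A : pcaut (SI * SO)%type) (f : nat -> nat).

(* A play of Gamma_f is determined by Player I's moves u_0 u_1 ..., i.e. by the
   infinite input word alpha = u_0 u_1 ... (with |u_i| = f i). Player O's move in
   round i is tau (u_0 ... u_i) = tau (prefix of alpha of length f 0 + ... + f i). *)
Definition outcome (tau : seq SI -> SO) (alpha : nat -> SI) : nat -> (SI * SO)%type :=
  fun i => (alpha i, tau (mkseq alpha (\sum_(k < i.+1) f k))).

Definition winning (tau : seq SI -> SO) : Prop :=
  forall alpha, accepts A (outcome tau alpha).

Definition cost_le (tau : seq SI -> SO) (k : nat) : Prop :=
  forall alpha, limsup_cor_le A (outcome tau alpha) k.

Definition has_cost (tau : seq SI -> SO) (k : nat) : Prop :=
  cost_le tau k /\ forall k', cost_le tau k' -> k <= k'.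

Definition optimal_with_cost (tau : seq SI -> SO) (k : nat) : Prop :=
  [/\ winning tau, has_cost tau k &
      forall tau', winning tau' -> forall k', cost_le tau' k' -> k <= k'].

End Delay.

From mathcomp Require Import all_boot zify.
Set Implicit Arguments. Unset Strict Implicit. Unset Printing Implicit Defensive.

(* The automaton cuts the input into rounds that start at color 2. Player O may
   end a round only by committing, at counter k, to the input bit m - k
   positions ahead; a false commitment, a second one while the first is
   pending, or a round of more than m + 1 letters leads to a rejecting sink.
   With delay j Player O knows the input j positions ahead, so committing at
   counter m - j is safe and costs m - j. Any earlier commitment concerns a bit
   Player O has not seen yet, and Player I falsifies it. Taking m = 2(n + 1)
   gives cost 2(n + 1) - j with O(n^2) states. *)

Lemma inord0 n : inord 0 = ord0 :> 'I_n.+1.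
Proof. by apply: val_inj; rewrite /= inordK. Qed.

Section Runs.
Variables (Sigma : finType) (A : pcaut Sigma).

Lemma run_ext (w w' : nat -> Sigma) n :
  (forall i, i < n -> w i = w' i) -> run A w n = run A w' n.
Proof.
elim: n => [|n IHn] //= eq_ww'.
by rewrite eq_ww' // IHn // => i /ltnW; exact: eq_ww'.
Qed.

Lemma run_trap w (s : st A) n n' :
  (forall a, delta s a = s) -> n <= n' -> run A w n = s -> run A w n' = s.
Proof.
move=> trap_s /subnKC <- run_n.
by elim: (n' - n) => [|l IHl]; rewrite ?addn0 // addnS /= IHl.
Qed.

Lemma accepts_avoids_trap w (s : st A) :
  (forall a, delta s a = s) -> odd (col s) -> accepts A w -> forall n, run A w n <> s.
Proof.
move=> trap_s odd_s [k [N cor_N]] n run_n.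
have trapped n' : n <= n' -> run A w n' = s by move=> le_nn'; exact: run_trap run_n.
have := cor_N (n + N) (leq_addl _ _); rewrite /cor_le trapped ?leq_addr // odd_s.
case=> // [[n' [lt_n' [+ _]]]]; rewrite !trapped ?leq_addr //; last by lia.
by rewrite /is_answer ltnn andbF.
Qed.

Lemma seg_cost_incr w n n' : (forall (q : st A) a, incr q a) -> seg_cost A w n n' = n' - n.
Proof.
move=> incrA; rewrite /seg_cost (@eq_count _ _ predT) ?count_predT ?size_iota //.
by move=> k; rewrite incrA.
Qed.

End Runs.

Lemma sum_fj j i : \sum_(k < i.+1) fj j k = i + j.+1.
Proof. by elim: i => [|i IHi]; rewrite big_ord_recr ?big_ord0 //= IHi; lia. Qed.

Lemma outcome_fj (SI SO : finType) j (tau : seq SI -> SO) alpha i :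
  outcome (fj j) tau alpha i = (alpha i, tau (mkseq alpha (i + j.+1))).
Proof. by rewrite /outcome sum_fj. Qed.

Lemma optimal_with_costI (SI SO : finType) (A : pcaut (SI * SO)%type) f tau k :
  cost_le A f tau k ->
  (forall tau', winning A f tau' -> forall k', cost_le A f tau' k' -> k <= k') ->
  optimal_with_cost A f tau k.
Proof.
move=> cost_tau lower_bound; have win_tau : winning A f tau by move=> alpha; exists k.
by split=> //; split=> // k'; apply: lower_bound.
Qed.

Section PrefixRecursion.
Variables (T : Type) (F : seq T -> T).

Fixpoint prefix_rec t :=
  if t is t'.+1 then rcons (prefix_rec t') (F (prefix_rec t')) else [::].

Definition seq_rec t := F (prefix_rec t).

Lemma seq_recE t : seq_rec t = F (mkseq seq_rec t).
Proof.
rewrite {1}/seq_rec; congr F.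
by elim: t => [|t IHt] //=; rewrite mkseqS -IHt.
Qed.

End PrefixRecursion.

Section CommitAutomaton.
Variable m : nat.
Implicit Types (k d : 'I_m.+1) (x b : bool).

(* A state [Some (k, o)] records the counter k of the current round and
   possibly an obligation [o = Some (d, b)]: the input read at counter d must
   be b. A letter pairs the input bit with Player O's move: [None] to wait,
   [Some b] to commit to b. Committing at counter k < m creates the obligation
   (m - k - 1, b) for the next round, i.e. on the input m - k positions ahead. *)
Definition obligation : finType := option ('I_m.+1 * bool).
Definition state : finType := option ('I_m.+1 * obligation).
Definition letter : finType := (bool * option bool)%type.

Definition advance k (o : obligation) x (out : option bool) : state :=
  match out with
  | None => if k == m :> nat then None else Some (inord k.+1, o)
  | Some b =>
      if o is Some _ then None
      else if k == m :> nat then (if x == b then Some (ord0, None) else None)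
      else Some (ord0, Some (inord (m - k.+1), b))
  end.

Definition step (q : state) (a : letter) : state :=
  if q is Some (k, o) then
    if o is Some (d, b) then
      if k == d :> nat then (if a.1 == b then advance k None a.1 a.2 else None)
      else advance k o a.1 a.2
    else advance k None a.1 a.2
  else None.

Definition color (q : state) : nat :=
  if q is Some (k, _) then (if k == 0 :> nat then 2 else 1) else 1.

Definition commit_aut : pcaut letter :=
  @PCAut letter state (Some (ord0, None)) step color (fun _ _ => true).

Lemma color_even q : ~~ odd (color q) -> exists k o, q = Some (k, o) /\ k = 0 :> nat.
Proof. by case: q => [[k o]|] //=; case: eqP => // k0; exists k, o. Qed.

Lemma codom_color c : c \in codom color <-> c = 1 \/ c = 2.
Proof.
split=> [/codomP[q ->]|[->|->]].
- by case: q => [[k o]|] /=; [case: eqP|]; auto.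
- by rewrite (_ : 1 = color None) ?codom_f.
- by rewrite (_ : 2 = color (Some (ord0, None))) ?codom_f.
Qed.

Lemma commit_aut_finitary_buchi : finitary_buchi commit_aut.
Proof. by split=> // c; exact: codom_color. Qed.

Lemma card_state : #|state| = (m.+1 * (m.+1 * 2).+1).+1.
Proof. by rewrite !card_option !card_prod !card_option card_prod card_ord card_bool. Qed.

Lemma run_commit_autS w n : run commit_aut w n.+1 = step (run commit_aut w n) (w n).
Proof. by []. Qed.

Lemma seg_cost_commit_aut w n n' : seg_cost commit_aut w n n' = n' - n.
Proof. exact: seg_cost_incr. Qed.

Lemma step_wait k o x q : step (Some (k, o)) (x, None) = Some q -> q.1 = k.+1 :> nat.
Proof.
have lt_k := ltn_ord k; rewrite /step /advance /=.
case: eqP => [_|/eqP k_neq_m]; first by case: o => [[d b]|] //; case: ifP => //; case: ifP.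
have counter_next o' : Some (inord k.+1, o') = Some q -> q.1 = k.+1 :> nat.
  by move=> [<-] /=; rewrite inordK //; lia.
by case: o => [[d b]|]; [case: ifP => _; [case: ifP => _ //|]|]; exact: counter_next.
Qed.

Lemma step_commit k o x b : k != m :> nat -> step (Some (k, o)) (x, Some b) <> None ->
  step (Some (k, o)) (x, Some b) = Some (ord0, Some (inord (m - k.+1), b)).
Proof.
move=> /negbTE k_neq_m; rewrite /step /advance k_neq_m.
by case: o => [[d b']|] //=; case: ifP => //; case: ifP.
Qed.

Lemma step_pending k d b x out : k != d :> nat -> k != m :> nat ->
  step (Some (k, Some (d, b))) (x, out) =
  if out is None then Some (inord k.+1, Some (d, b)) else None.
Proof.
move=> /negbTE k_neq_d /negbTE k_neq_m.
by rewrite /step /advance k_neq_d k_neq_m; case: out.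
Qed.

Lemma step_violated k d b x out : k = d :> nat -> x != b ->
  step (Some (k, Some (d, b))) (x, out) = None.
Proof. by move=> k_eq_d /negbTE x_neq_b; rewrite /step k_eq_d eqxx /= x_neq_b. Qed.

Lemma step_due k d b : k = d :> nat -> k != m :> nat ->
  step (Some (k, Some (d, b))) (b, None) = Some (inord k.+1, None).
Proof.
move=> k_eq_d /negbTE k_neq_m.
by rewrite /step /advance k_eq_d !eqxx -k_eq_d k_neq_m.
Qed.

Lemma step_idle k x : k != m :> nat ->
  step (Some (k, None)) (x, None) = Some (inord k.+1, None).
Proof. by move=> /negbTE k_neq_m; rewrite /step /advance k_neq_m. Qed.

Lemma step_commit_ahead k x b : k != m :> nat ->
  step (Some (k, None)) (x, Some b) = Some (ord0, Some (inord (m - k.+1), b)).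
Proof. by move=> /negbTE k_neq_m; rewrite /step /advance k_neq_m. Qed.

Lemma step_commit_now k b : k = m :> nat ->
  step (Some (k, None)) (b, Some b) = Some (ord0, None).
Proof. by move=> k_eq_m; rewrite /step /advance k_eq_m /= !eqxx. Qed.

End CommitAutomaton.

Arguments step : simpl never.

Section UpperBound.
Variables (m j : nat).
Let L := (m - j).+1.

Definition tau_upper (s : seq bool) : option bool :=
  if (size s - j.+1) %% L == m - j then Some (last false s) else None.

Variable alpha : nat -> bool.
Let w := outcome (fj j) tau_upper alpha.

Lemma outcome_upper i :
  w i = (alpha i, if i %% L == m - j then Some (alpha (i + j)) else None).
Proof.
rewrite /w outcome_fj /tau_upper size_mkseq addnK; case: ifP => // _.
by rewrite -nth_last size_mkseq addnS nth_mkseq.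
Qed.

(* The commitment made at counter m - j of round r - 1 is an obligation on
   counter j - 1 of round r; it is met before the next commitment as 2j < m. *)
Definition upper_state r l : state m :=
  Some (inord l, if (0 < r) && (l < j) then Some (inord j.-1, alpha (r * L + j.-1)) else None).

Lemma run_upper_within r l : l < m - j ->
  run (commit_aut m) w (r * L + l) = upper_state r l ->
  run (commit_aut m) w (r * L + l.+1) = upper_state r l.+1.
Proof.
move=> lt_l run_l; rewrite addnS run_commit_autS run_l outcome_upper.
rewrite modnMDl modn_small; last by lia.
have [l_neq_m l_neq_mj] : l != m /\ l != m - j by lia.
rewrite (negbTE l_neq_mj) /upper_state.
have inord_l : (inord l : 'I_m.+1) = l :> nat by rewrite inordK //; lia.
case: (ltnP l j) => [lt_lj|le_jl]; last first.
  have -> : (l.+1 < j) = false by lia.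
  by rewrite !andbF /= step_idle ?inord_l.
case: (posnP r) => [-> /=|r_gt0 /=]; first by rewrite step_idle ?inord_l.
have inord_j : (inord j.-1 : 'I_m.+1) = j.-1 :> nat by rewrite inordK //; lia.
case: (eqVneq l j.-1) => [l_eq|l_neq].
  by rewrite l_eq step_due ?inord_j -?l_eq ?inord_l // (_ : l.+1 < j = false) //; lia.
by rewrite step_pending ?inord_j ?inord_l // (_ : l.+1 < j) //; lia.
Qed.

Hypothesis two_j_lt_m : 2 * j < m.

Lemma run_upper_next r :
  run (commit_aut m) w (r * L + (m - j)) = upper_state r (m - j) ->
  run (commit_aut m) w (r.+1 * L + 0) = upper_state r.+1 0.
Proof.
have -> : r.+1 * L + 0 = (r * L + (m - j)).+1 by rewrite mulSn /L; lia.
move=> run_l; rewrite run_commit_autS run_l outcome_upper.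
rewrite modnMDl modn_small ?eqxx; last by lia.
rewrite /upper_state (_ : m - j < j = false) ?andbF /= ?inord0; last by lia.
have inord_mj : (inord (m - j) : 'I_m.+1) = m - j :> nat by rewrite inordK //; lia.
case: (posnP j) => [j0|j_gt0].
  by rewrite j0 subn0 addn0 step_commit_now // inordK.
rewrite step_commit_ahead ?inord_mj; last by lia.
congr (Some (_, Some (_, _))); first by apply: val_inj; rewrite /= !inordK; lia.
by congr alpha; rewrite mulSn /L; lia.
Qed.

Lemma run_upper r l : l <= m - j -> run (commit_aut m) w (r * L + l) = upper_state r l.
Proof.
elim: r l => [|r IHr] l.
  elim: l => [|l IHl] le_l; first by rewrite /upper_state /= inord0.
  by apply: run_upper_within; [lia|apply: IHl; lia].
elim: l => [|l IHl] le_l; first by apply: run_upper_next; apply: IHr.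
by apply: run_upper_within; [lia|apply: IHl; lia].
Qed.

Lemma limsup_upper : limsup_cor_le (commit_aut m) w (m - j).
Proof.
have color_upper r l : l <= m - j ->
    col (p := commit_aut m) (upper_state r l) = if l == 0 then 2 else 1.
  by move=> le_l; rewrite /= inordK //; lia.
have two_color : 2 \in codom (col (p := commit_aut m)) by apply/codom_color; right.
exists 0 => n _; have lt_l : n %% L < L by rewrite ltn_mod.
rewrite /cor_le (divn_eq n L) run_upper; last by lia.
case: (posnP (n %% L)) => [l0|l_gt0]; first by left; rewrite color_upper ?l0.
right; exists ((n %/ L).+1 * L + 0); rewrite run_upper // !color_upper //.
rewrite (negbTE (lt0n_neq0 l_gt0)) seg_cost_commit_aut /is_answer /= two_color.
by rewrite mulSn; split; [lia|split; [|lia]].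
Qed.

End UpperBound.

Lemma cost_upper m j : 2 * j < m -> cost_le (commit_aut m) (fj j) (tau_upper m j) (m - j).
Proof. by move=> two_j_lt_m alpha; exact: limsup_upper. Qed.

Section LowerBound.
Variables (m j : nat) (tau : seq bool -> option bool).

Definition observed (s : seq bool) (i : nat) : letter :=
  (nth false s i, tau (take (i + j.+1) s)).

(* Player O's moves before position t - j depend only on the inputs before t,
   so the run up to t - j is known when Player I chooses input t; if that run
   holds an obligation on position t, Player I falsifies it. *)
Definition spoil (s : seq bool) : bool :=
  if run (commit_aut m) (observed s) (size s - j) is Some (k, Some (d, b))
  then (d == k + j :> nat) && ~~ b else false.

Definition alpha_lower : nat -> bool := seq_rec spoil.

Let w := outcome (fj j) tau alpha_lower.

Lemma alpha_lower_spoils p k d b :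
  run (commit_aut m) w p = Some (k, Some (d, b)) -> d = k + j :> nat ->
  alpha_lower (p + j) = ~~ b.
Proof.
move=> run_p d_eq; rewrite /alpha_lower seq_recE /spoil size_mkseq addnK.
rewrite (@run_ext _ _ _ w) ?run_p ?d_eq ?eqxx // => i lt_i.
have take_prefix :
    take (i + j.+1) (mkseq alpha_lower (p + j)) = mkseq alpha_lower (i + j.+1).
  by rewrite -map_take take_iota; congr mkseq; lia.
by rewrite /w outcome_fj /observed nth_mkseq ?take_prefix //; lia.
Qed.

Hypothesis tau_winning : winning (commit_aut m) (fj j) tau.

Lemma run_lower_alive n : run (commit_aut m) w n <> None.
Proof. by apply: (@accepts_avoids_trap _ (commit_aut m) w None) => //; exact: tau_winning. Qed.

Lemma obligation_kept p k d b :
  run (commit_aut m) w p = Some (k, Some (d, b)) -> k <= d ->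
  forall l, l <= d - k ->
  exists2 k', run (commit_aut m) w (p + l) = Some (k', Some (d, b)) & k' = k + l :> nat.
Proof.
move=> run_p le_kd; elim=> [|l IHl] le_l; first by exists k; rewrite ?addn0.
have [k' run_pl k'_eq] := IHl (ltnW le_l).
have := @run_lower_alive (p + l).+1; rewrite addnS run_commit_autS run_pl.
have lt_d := ltn_ord d.
case: (w (p + l)) => x out; rewrite step_pending; try lia.
by case: out => // _; exists (inord k'.+1) => //; rewrite inordK; lia.
Qed.

Lemma no_early_commit p k o :
  run (commit_aut m) w p = Some (k, o) -> k < m - j -> (w p).2 = None.
Proof.
move=> run_p lt_k; case E: (w p) => [x [b|]] //=; exfalso.
set d : 'I_m.+1 := inord (m - k.+1).
have d_val : d = m - k.+1 :> nat by rewrite inordK; lia.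
have run_p1 : run (commit_aut m) w p.+1 = Some (ord0, Some (d, b)).
  rewrite run_commit_autS run_p E step_commit //; first by lia.
  by move: (@run_lower_alive p.+1); rewrite run_commit_autS run_p E.
have [k1 run_k1 k1_eq] :=
  obligation_kept run_p1 (leq0n _) (l := d - j) (leq_sub2l _ (leq0n j)).
have spoiled := alpha_lower_spoils run_k1 (ltac:(rewrite k1_eq d_val /=; lia)).
have [k2 run_d k2_eq] := obligation_kept run_p1 (leq0n _) (l := d) (eq_leq (esym (subn0 d))).
apply: (@run_lower_alive (p.+1 + d).+1).
rewrite run_commit_autS run_d /w outcome_fj step_violated //.
by rewrite -(subnK (_ : j <= d)) ?addnA ?spoiled; [case: (b)|lia].
Qed.

Lemma counter_climbs p k0 o0 :
  run (commit_aut m) w p = Some (k0, o0) -> k0 = 0 :> nat ->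
  forall i, i <= m - j -> exists k o, run (commit_aut m) w (p + i) = Some (k, o) /\ k = i :> nat.
Proof.
move=> run_p k0_eq; elim=> [|i IHi] le_i; first by exists k0, o0; rewrite addn0.
have [k [o [run_i k_eq]]] := IHi (ltnW le_i).
have := @run_lower_alive (p + i).+1; rewrite addnS run_commit_autS run_i.
have wait := no_early_commit run_i (ltac:(lia)); case: (w (p + i)) wait => x out /= -> {out}.
by case E: step => [[k' o']|] // _; exists k', o'; rewrite (step_wait E) k_eq.
Qed.

Lemma no_answer_before p k0 o0 :
  run (commit_aut m) w p = Some (k0, o0) -> k0 = 0 :> nat ->
  forall n', p < n' <= p + (m - j) -> odd (col (run (commit_aut m) w n')).
Proof.
move=> run_p k0_eq n' /andP[lt_n' le_n']; rewrite -(subnKC (ltnW lt_n')).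
have [k [o [-> k_eq]]] := counter_climbs run_p k0_eq (ltac:(lia) : n' - p <= m - j).
by rewrite /= k_eq; case: eqP => //; lia.
Qed.

Hypothesis j_lt_m : j < m.

Lemma limsup_lower k : limsup_cor_le (commit_aut m) w k -> m - j <= k.
Proof.
move=> [N cor_N].
have [p [le_Np even_p]] : exists p, N <= p /\ ~~ odd (col (run (commit_aut m) w p)).
  case: (cor_N N (leqnn N)) => [even_N|[n' [lt_n' [/and3P[_ _ even_n'] _]]]].
    by exists N.
  by exists n'; split; first exact: ltnW.
have [k0 [o0 [run_p k0_eq]]] := color_even even_p.
have odd_after := no_answer_before run_p k0_eq.
case: (cor_N p.+1 (leqW le_Np)) => [|[n' [lt_n' [/and3P[_ _ even_n'] cost_n']]]].
  by rewrite odd_after //; lia.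
rewrite seg_cost_commit_aut in cost_n'.
suff : p + (m - j) < n' by lia.
by rewrite ltnNge; apply: (contra _ even_n') => le_n'; rewrite odd_after //; lia.
Qed.

End LowerBound.

Lemma cost_lower m j tau k : j < m ->
  winning (commit_aut m) (fj j) tau -> cost_le (commit_aut m) (fj j) tau k -> m - j <= k.
Proof. by move=> j_lt_m tau_winning /(_ (alpha_lower m j tau)); exact: limsup_lower. Qed.

Theorem theorem7 :
  exists c : nat, forall n : nat, 0 < n ->
    exists (SI SO : finType) (A : pcaut (SI * SO)%type),
      finitary_buchi A /\ #|st A| <= c * n ^ 2 /\
      forall j, j <= n ->
        exists tau : seq SI -> SO,
          optimal_with_cost A (fj j) tau (2 * n.+1 - j).
Proof.
exists 60 => n n_gt0; set m := 2 * n.+1.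
exists bool, (option bool), (commit_aut m).
split; first exact: commit_aut_finitary_buchi.
split; first by rewrite card_state /m; nia.
move=> j le_jn; exists (tau_upper m j).
apply: optimal_with_costI; first by apply: cost_upper; lia.
by move=> tau' tau'_winning k'; apply: cost_lower => //; lia.
Qed.
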